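(* Let $n,i$ be natural numbers and let $A$ be a brace of cardinality $p^n$, where $p$ is a prime with $p>n+1$. Then $\mathrm{ann}(p^i)=\{a\in A: p^ia=0\}$ is an ideal of $A$.
   Context: A (left) brace is a set $A$ with binary operations $+,\circ$ such that $(A,+)$ is an abelian group, $(A,\circ)$ is a group, and $a\circ(b+c)+a=a\circ b+a\circ c$ for all $a,b,c$. Write $a*b=a\circ b-a-b$. An ideal of a brace $A$ is a subgroup $I$ of $(A,+)$ which is a normal subgroup of $(A,\circ)$ and satisfies $a*x\in I$ for all $a\in A$, $x\in I$; equivalently, an additive subgroup $I$ with $A*I\subseteq I$ and $I*A\subseteq I$. $p^ia$ denotes the $p^i$-fold additive multiple of $a$. *)

From HB Require Import structures.
From mathcomp Require Import all_boot all_algebra.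
Set Implicit Arguments. Unset Strict Implicit. Unset Printing Implicit Defensive.
Import GRing.Theory.
Local Open Scope ring_scope.

Record brace (T : zmodType) := Brace {
  circ : T -> T -> T;
  cinv : T -> T;
  cone : T;
  circA : forall a b c, circ a (circ b c) = circ (circ a b) c;
  circ1g : forall a, circ cone a = a;
  circg1 : forall a, circ a cone = a;
  circVg : forall a, circ (cinv a) a = cone;
  circgV : forall a, circ a (cinv a) = cone;
  brace_dist : forall a b c, circ a (b + c) + a = circ a b + circ a c
}.

Definition bstar (T : zmodType) (B : brace T) (a b : T) : T :=
  circ B a b - a - b.

Definition is_ideal (T : finZmodType) (B : brace T) (I : {set T}) : Prop :=
  [/\ (0 \in I) /\ (forall x y, x \in I -> y \in I -> x - y \in I),
      [/\ cone B \in I,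
          (forall x y, x \in I -> y \in I -> circ B x y \in I),
          (forall x, x \in I -> cinv B x \in I) &
          (forall g x, x \in I -> circ B (circ B g x) (cinv B g) \in I)] &
      (forall a x, x \in I -> bstar B a x \in I)].

Definition ann (T : finZmodType) (m : nat) : {set T} := [set a : T | a *+ m == 0].

(* The maps lambda_a y = a o y - a are additive automorphisms of (A, +) with
   lambda_a lambda_b = lambda_(a o b).  Since (A, o) has order p^n, lambda_x has
   p-power order on the p-group (A, +), so lambda_x - 1 = (x * _) is nilpotent of
   index at most n.  Expanding powers in (A, o) then gives
     x^(o m) = sum_(k < n) C(m, k+1) (x * _)^k x,
   and as p^i divides C(p^i, k+1) for k+1 < p, x^(o p^i) = u (p^i x) for a unipotent
   additive u.  So ann(p^i) = {x | x^(o p^i) = 1} is normal in (A, o); the other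
   closure properties hold because every lambda_a is additive. *)

From HB Require Import structures.
From mathcomp Require Import all_boot all_algebra all_fingroup all_solvable.
From mathcomp Require Import zify.
Set Implicit Arguments. Unset Strict Implicit. Unset Printing Implicit Defensive.
Import GRing.Theory FinRing.Theory.
Local Open Scope ring_scope.

Section IterAdditive.
Variables (T : zmodType) (f : {additive T -> T}) (k : nat).

Fact iter_is_nmod_morphism : nmod_morphism (iter k f).
Proof.
split; first by elim: k => //= m ->; rewrite raddf0.
by elim: k => // m IH x y /=; rewrite IH raddfD.
Qed.

HB.instance Definition _ :=
  GRing.isNmodMorphism.Build T T (iter k f) iter_is_nmod_morphism.

End IterAdditive.

Lemma nilpotent_combination_eq0 (T : zmodType) (L : {additive T -> T}) n
    (c : nat -> nat) z :
  (forall y, iter n L y = 0) -> c 0%N = 1%N ->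
  \sum_(k < n) iter k L z *+ c k = 0 -> z = 0.
Proof.
move=> Ln0 c0 comb0.
suff iterL0 m : (m <= n)%N -> iter (n - m) L z = 0 by have := iterL0 n (leqnn n); rewrite subnn.
elim: m => [|m IH] ltmn; first by rewrite subn0 Ln0.
have n_gt0 : (0 < n)%N by lia.
have := congr1 (iter (n - m.+1) L) comb0.
rewrite raddf0 raddf_sum (bigD1 (Ordinal n_gt0)) //= c0 big1 ?addr0 // => k.
rewrite -val_eqE /= => k_neq0; rewrite raddfMn /= -iterD.
have -> : (n - m.+1 + k = k.-1 + (n - m))%N by lia.
by rewrite iterD IH ?(ltnW ltmn) // raddf0 mul0rn.
Qed.

Lemma dvdn_bin_pexp p i k : prime p -> (0 < k < p)%N -> (p ^ i %| 'C(p ^ i, k))%N.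
Proof.
case: k => // k p_pr /andP[_ lt_kp].
have cop : coprime (p ^ i) k.+1.
  by apply: coprimeXl; rewrite prime_coprime // gtnNdvd.
by rewrite -(Gauss_dvdl _ cop) mulnC -mul_bin_diag dvdn_mulr.
Qed.

Section BraceLambda.
Variables (T : zmodType) (B : brace T).

Definition lambda a y := circ B a y - a.

Definition circX x m := iter m (circ B x) (cone B).

Lemma circr0 a : circ B a 0 = a.
Proof. by apply: (addrI (circ B a 0)); rewrite -brace_dist !addr0. Qed.

Lemma cone_eq0 : cone B = 0.
Proof. by rewrite -(circr0 (cone B)) circ1g. Qed.

Lemma circE a b : circ B a b = a + lambda a b.
Proof. by rewrite /lambda addrC subrK. Qed.

Fact lambda_is_nmod_morphism a : nmod_morphism (lambda a).
Proof.
split=> [|u v]; first by rewrite /lambda circr0 subrr.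
rewrite /lambda addrACA -[circ B a (u + v)](addrK a) brace_dist.
by rewrite addrA.
Qed.

HB.instance Definition _ a :=
  GRing.isNmodMorphism.Build T T (lambda a) (lambda_is_nmod_morphism a).

Lemma bstarE a y : bstar B a y = lambda a y - y.
Proof. by rewrite /bstar /lambda addrAC. Qed.

Fact bstar_is_nmod_morphism a : nmod_morphism (bstar B a).
Proof.
split=> [|u v]; first by rewrite bstarE raddf0 subr0.
by rewrite !bstarE raddfD opprD addrACA.
Qed.

HB.instance Definition _ a :=
  GRing.isNmodMorphism.Build T T (bstar B a) (bstar_is_nmod_morphism a).

Lemma lambdaM a b y : lambda a (lambda b y) = lambda (circ B a b) y.
Proof. by rewrite [lambda b y]/lambda raddfB /= /lambda circA opprB addrA subrK. Qed.

Lemma lambda1 y : lambda (cone B) y = y.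
Proof. by rewrite /lambda circ1g cone_eq0 subr0. Qed.

Lemma iter_lambda x m y : iter m (lambda x) y = lambda (circX x m) y.
Proof. by elim: m => [|m IH] /=; rewrite ?lambda1 // IH lambdaM. Qed.

Lemma cinvE x : cinv B x = - lambda (cinv B x) x.
Proof. by apply/eqP; rewrite -addr_eq0 -circE circVg cone_eq0. Qed.

Lemma circX_conj g x m :
  circX (circ B (circ B g x) (cinv B g)) m = circ B (circ B g (circX x m)) (cinv B g).
Proof.
elim: m => [|m IH] /=; first by rewrite circg1 circgV.
rewrite IH !circA; congr (circ B (circ B _ _) _).
by rewrite -[circ B (circ B (circ B g x) (cinv B g)) g]circA circVg circg1.
Qed.

Lemma circX_binomial n x : iter n (bstar B x) x = 0 ->
  forall m, circX x m = \sum_(k < n) iter k (bstar B x) x *+ 'C(m, k.+1).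
Proof.
move=> nil_x; elim=> [|m IH].
  by rewrite /circX cone_eq0 big1 // => k _; rewrite bin0n mulr0n.
rewrite /circX iterS -/(circX x m).
have circ_bstar y : circ B x y = x + y + bstar B x y
  by rewrite /bstar -[_ - x - y]addrA -opprD [RHS]addrC subrK.
have shift : \sum_(k < n) iter k (bstar B x) x *+ 'C(m, k) =
             x + \sum_(k < n) iter k.+1 (bstar B x) x *+ 'C(m, k.+1).
  have := @big_ord_recr T 0 +%R n
    (fun k : 'I_n.+1 => iter k (bstar B x) x *+ 'C(m, k)).
  by rewrite big_ord_recl /= nil_x mul0rn addr0 bin0 mulr1n => <-.
have bstar_sum : bstar B x (\sum_(k < n) iter k (bstar B x) x *+ 'C(m, k.+1)) =
                 \sum_(k < n) iter k.+1 (bstar B x) x *+ 'C(m, k.+1).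
  by rewrite raddf_sum; apply: eq_bigr => k _; rewrite raddfMn.
rewrite circ_bstar IH bstar_sum.
under [RHS]eq_bigr => k _ do rewrite binS mulrnDr.
by rewrite big_split /= shift addrCA addrA.
Qed.

End BraceLambda.

Lemma circX_card (T : finZmodType) (B : brace T) x : circX B x #|T| = cone B.
Proof.
have circ_inj g : injective (circ B g).
  by move=> u v /(congr1 (circ B (cinv B g))); rewrite !circA circVg !circ1g.
(* rho embeds (T, o) into {perm T}, turning Lagrange's theorem into x^(o #|T|) = 1. *)
pose rho g : {perm T} := perm (circ_inj g).
have rhoE g y : rho g y = circ B g y by rewrite permE.
have rho_group : group_set (rho @: [set: T]).
  apply/group_setP; split.
    by apply/imsetP; exists (cone B) => //; apply/permP => y; rewrite rhoE perm1 circ1g.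
  move=> _ _ /imsetP[g _ ->] /imsetP[h _ ->]; apply/imsetP.
  by exists (circ B h g) => //; apply/permP => y; rewrite permM !rhoE circA.
have rho_inj : injective rho.
  by move=> g h /(congr1 (fun s : {perm T} => s (cone B))); rewrite !rhoE !circg1.
have := order_dvdG (imset_f rho (in_setT x) : rho x \in Group rho_group).
rewrite card_imset // cardsT order_dvdn => /eqP/(congr1 (fun s : {perm T} => s (cone B))).
by rewrite permX perm1 /circX => {2}<-; apply: eq_iter => y; rewrite rhoE.
Qed.

Lemma additive_image_group (T : finZmodType) (f : {additive T -> T}) (S : {group T}) :
  group_set (f @: S).
Proof.
apply/group_setP; split.
  by apply/imsetP; exists 1%g; [exact: group1 | exact/esym/(raddf0 f)].
move=> _ _ /imsetP[a aS ->] /imsetP[b bS ->].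
by rewrite zmodMgE -raddfD imset_f ?groupM.
Qed.

Section PElementAdditive.
Local Open Scope group_scope.
Variables (T : finZmodType) (p e : nat) (f : {additive T -> T}).
Hypotheses (p_pr : prime p) (pT : p.-group [set: T]).
Hypothesis f_pe : forall y, iter (p ^ e) f y = y.

Lemma pelt_additive_inj : injective f.
Proof.
apply: (can_inj (g := iter (p ^ e).-1 f)) => y.
by rewrite -iterSr prednK ?expn_gt0 ?prime_gt0 // f_pe.
Qed.

Lemma pelt_additive_fixed (S : {group T}) :
  f @: S \subset S -> S :!=: 1 -> exists2 z, z \in S & (z != 0) && (f z == z).
Proof.
move=> fS ntS; pose s : {perm T} := perm pelt_additive_inj.
have sE y : s y = f y by rewrite permE.
have ps : p.-group <[s]>.
  apply: (@pnat_dvd _ (p ^ e)); last by rewrite pnatX pnat_id.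
  rewrite order_dvdn; apply/eqP/permP => y; rewrite permX perm1 -{2}(f_pe y).
  by apply: eq_iter => z; rewrite sE.
have fSE : f @: S = S.
  by apply/eqP; rewrite eqEcard fS card_imset ?leqnn //; exact: pelt_additive_inj.
have sS : [acts <[s]>, on S | 'P].
  rewrite cycle_subG; apply/astabsP => y /=.
  by rewrite apermE sE -{1}fSE mem_imset //; exact: pelt_additive_inj.
pose F := 'Fix_(S | 'P)(<[s]>).
have inF z : (z \in F) = (z \in S) && (f z == z).
  by rewrite inE afix_cycle; congr (_ && _); apply/afix1P/eqP; rewrite /= apermE sE.
have F0 : 0 \in F by rewrite inF raddf0 eqxx andbT; exact: group1.
have [_ p_dvd_S _] := pgroup_pdiv (pgroupS (subsetT S) pT) ntS.
have p_dvd_F : (p %| #|F|)%N.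
  by rewrite /dvdn -(pgroup_fix_mod ps sS); exact: p_dvd_S.
have : (0 < #|F :\ 0%R|)%N.
  have F_gt0 : (0 < #|F|)%N by apply/card_gt0P; exists 0%R.
  have := dvdn_leq F_gt0 p_dvd_F.
  by rewrite (cardsD1 0%R F) F0 add1n => /(leq_trans (prime_gt1 p_pr)).
by move=> /card_gt0P[z]; rewrite in_setD1 inF => /and3P[zn0 zS fz]; exists z; rewrite ?zn0.
Qed.

Lemma pelt_additive_sub1_nilpotent x : iter (logn p #|T|) (f \- idfun) x = 0%R.
Proof.
pose L : {additive T -> T} := f \- idfun.
have cardG (G : {group T}) : #|G| = (p ^ logn p #|G|)%N.
  exact: card_pgroup (pgroupS (subsetT G) pT).
suff nilS m (S : {group T}) : f @: S \subset S -> (logn p #|S| <= m)%N ->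
    {in S, forall y, iter m L y = 0%R}.
  by apply: (nilS _ [set: T]%G); rewrite ?subsetT ?cardsT ?inE.
(* L vanishes on a nonzero fixed point of f, so L @: S is a proper f-stable subgroup. *)
elim: m S => [|m IH] S fS logS y yS.
  have S1 : S :=: 1.
    by apply: card_le1_trivg; rewrite cardG; move: logS; rewrite leqn0 => /eqP ->.
  by move: yS; rewrite S1 inE => /eqP ->; rewrite raddf0.
have [S1 | ntS] := eqVneq (S : {set T}) 1.
  by move: yS; rewrite S1 inE => /eqP ->; rewrite raddf0.
have [z zS /andP[z_neq0 /eqP fz]] := pelt_additive_fixed fS ntS.
pose S' := Group (additive_image_group L S).
have fS' : f @: S' \subset S'.
  have fL a : f (L a) = L (f a) by rewrite /= raddfB.
  apply/subsetP => _ /imsetP[_ /imsetP[a aS ->] ->].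
  by rewrite fL imset_f // (subsetP fS) ?imset_f.
have ltS' : (#|S'| < #|S|)%N.
  rewrite ltn_neqAle leq_imset_card andbT; apply/negP => /imset_injP L_inj.
  by move: z_neq0; rewrite (L_inj z 0%R) ?eqxx ?group1 // (raddf0 L) /= fz subrr.
rewrite iterSr; apply: (IH S') => //; last exact: imset_f.
by move: ltS'; rewrite {1}(cardG S') {1}(cardG S) ltn_exp2l ?prime_gt1 //; lia.
Qed.
End PElementAdditive.

Section Annihilator.
Variables (T : finZmodType) (m : nat).
Implicit Types a b : T.

Lemma mem_ann a : (a \in ann T m) = (a *+ m == 0).
Proof. by rewrite inE. Qed.

Lemma ann0 : 0 \in ann T m.
Proof. by rewrite mem_ann mul0rn. Qed.

Lemma annD a b : a \in ann T m -> b \in ann T m -> a + b \in ann T m.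
Proof. by rewrite !mem_ann mulrnDl => /eqP-> /eqP->; rewrite addr0. Qed.

Lemma annN a : a \in ann T m -> - a \in ann T m.
Proof. by rewrite !mem_ann mulNrn => /eqP->; rewrite oppr0. Qed.

Lemma annB a b : a \in ann T m -> b \in ann T m -> a - b \in ann T m.
Proof. by move=> aI bI; rewrite annD ?annN. Qed.

Lemma ann_raddf (f : {additive T -> T}) a : a \in ann T m -> f a \in ann T m.
Proof. by rewrite !mem_ann -raddfMn => /eqP->; rewrite raddf0. Qed.

End Annihilator.

Section BraceOfPrimePowerOrder.
Variables (T : finZmodType) (B : brace T) (p n : nat).
Hypotheses (p_pr : prime p) (cardT : #|T| = (p ^ n)%N).

Lemma bstar_nilpotent x y : iter n (bstar B x) y = 0.
Proof.
have pT : (p.-group [set: T])%g by rewrite /pgroup cardsT cardT pnatX pnat_id.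
have lambda_pn z : iter (p ^ n) (lambda B x) z = z.
  by rewrite iter_lambda -cardT circX_card lambda1.
have := pelt_additive_sub1_nilpotent p_pr pT lambda_pn y.
rewrite cardT pfactorK // => <-; apply: eq_iter => z; exact: bstarE.
Qed.

Hypothesis Sn_lt_p : (n.+1 < p)%N.

Lemma mulrn_pexp_eq0_circX x i : (x *+ p ^ i == 0) = (circX B x (p ^ i) == 0).
Proof.
rewrite (circX_binomial (bstar_nilpotent x x)).
have -> : \sum_(k < n) iter k (bstar B x) x *+ 'C(p ^ i, k.+1) =
    \sum_(k < n) iter k (bstar B x) (x *+ p ^ i) *+ ('C(p ^ i, k.+1) %/ p ^ i).
  apply: eq_bigr => k _; rewrite raddfMn -mulrnA mulnC divnK // dvdn_bin_pexp //.
  by have := ltn_ord k; lia.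
apply/eqP/eqP => [-> | comb0]; first by rewrite big1 // => k _; rewrite raddf0 mul0rn.
apply: (@nilpotent_combination_eq0 _ (bstar B x : {additive T -> T}) n
          (fun k => 'C(p ^ i, k.+1) %/ p ^ i)%N _ (bstar_nilpotent x) _ comb0).
by rewrite bin1 divnn expn_gt0 prime_gt0.
Qed.

End BraceOfPrimePowerOrder.

Theorem lemma15 (p n i : nat) (T : finZmodType) (B : brace T) :
  prime p -> (n.+1 < p)%N -> #|T| = (p ^ n)%N ->
  is_ideal B (ann T (p ^ i)).
Proof.
move=> p_pr n_lt_p cardT.
split; [split | split | ].
- exact: ann0.
- exact: annB.
- by rewrite cone_eq0 ann0.
- by move=> x y xI yI; rewrite circE annD ?ann_raddf.
- by move=> x xI; rewrite cinvE annN ?ann_raddf.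
- move=> g x; rewrite !mem_ann !(mulrn_pexp_eq0_circX B p_pr cardT n_lt_p).
  by rewrite circX_conj => /eqP->; rewrite circr0 circgV cone_eq0.
- by move=> a x xI; rewrite bstarE annB ?ann_raddf.
Qed.
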